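(* For each irreducible representation $\alpha$ of $G^n$, let $\widetilde{\mathcal H}^\alpha_r$ be a Hilbert space of dimension $n_\alpha$ with orthonormal basis $\{|\alpha i\rangle_r\}_{i=1}^{n_\alpha}$, and let $\widetilde{\mathcal H}^{\bar\alpha}_{\bar r}$ be a Hilbert space of dimension $\bar n_{\bar\alpha}$ with orthonormal basis $\{|\bar\alpha j\rangle_{\bar r}\}_{j=1}^{\bar n_{\bar\alpha}}$. Define $$W:\widetilde{\mathcal H}\to\bigoplus_\alpha\widetilde{\mathcal H}^\alpha_r\otimes\widetilde{\mathcal H}^{\bar\alpha}_{\bar r},\qquad W\Big(\sum_{\alpha ijk}\widetilde\psi_{\alpha ij}|\alpha ik\rangle_r|\bar\alpha jk\rangle_{\bar r}\Big)=\sum_{\alpha ij}\sqrt{d_\alpha}\,\widetilde\psi_{\alpha ij}\,|\alpha i\rangle_r|\bar\alpha j\rangle_{\bar r}.$$ Then: - $W$ is a unitary isomorphism. - Under conjugation by $W$ (with elements of $\widetilde{\mathcal A}_r$, $\widetilde{\mathcal A}_{\bar r}$ restricted to $\widetilde{\mathcal H}$), one has $$W\widetilde{\mathcal A}_rW^{\dagger}=\bigoplus_\alpha\mathcal B(\widetilde{\mathcal H}^\alpha_r)\otimes1^{\bar\alpha}_{\bar r}\quad\text{and}\quad W\widetilde{\mathcal A}_{\bar r}W^\dagger=\bigoplus_\alpha1^\alpha_r\otimes\mathcal B(\widetilde{\mathcal H}^{\bar\alpha}_{\bar r}).$$ - Explicitly, the element of $\widetilde{\mathcal A}_r$ with coefficients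 $\widetilde{\mathcal O}_{\alpha ij}$, namely $\sum_{\alpha ii'jk\ell}\widetilde{\mathcal O}_{\alpha ij}|\alpha ik\rangle_r\langle\alpha j\ell|\otimes|\bar\alpha i'k\rangle_{\bar r}\langle\bar\alpha i'\ell|$, is mapped to $\bigoplus_\alpha\big(\sum_{ij}d_\alpha\widetilde{\mathcal O}_{\alpha ij}|\alpha i\rangle_r\langle\alpha j|\big)\otimes 1^{\bar\alpha}_{\bar r}$.
   Context: Setup. Let $G$ be a compact Lie group (possibly finite) with normalized Haar measure $dg$ ($\int dg=1$). For each irreducible unitary representation $\alpha$ fix unitary matrices $D^\alpha(g)$ of dimension $d_\alpha$; the conjugate representation is $D^{\bar\alpha}=\overline{D^\alpha}$. Let $\Lambda=(V,E)$ be a finite directed graph; loops and multiple edges are allowed. Each edge $e$ carries $\mathcal H_e=L^2(G)$ with unitaries $L_e(g)|h\rangle=|gh\rangle$ and $R_e(g^{-1})|h\rangle=|hg^{-1}\rangle$. Each vertex $v$ carries a Hilbert space $\mathcal H_v$ with a unitary representation $U_v$ of $G$. All these spaces are taken finite-dimensional by truncating to finitely many irreducible isotypic sectors, invariant under the group actions. The pre-gauged space is $\mathcal H=\bigotimes_v\mathcal H_v\otimes\bigotimes_e\mathcal H_e$. The gauge transformation at $v$ is $A_v(g)=U_v(g)\prod_{e\in E^-(v)}L_e(g)\prod_{e\in E^+(v)}R_e(g^{-1})$, where $E^-(v)$ is the set of edges oriented out of $v$ and $E^+(v)$ the set of edges oriented into $v$. Set $\Pi_v=\int dg\,A_v(g)$,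 $\Pi_{GI}=\prod_v\Pi_v$ and $\widetilde{\mathcal H}=\Pi_{GI}\mathcal H$. Subregions. A subregion $r$ is an arbitrary subset of $V\cup E$, and $\bar r$ is its complement. Let $\mathcal H_r=\bigotimes_{x\in r}\mathcal H_x$, $\mathcal A_r=\mathcal B(\mathcal H_r)\otimes1_{\bar r}$ and $\mathcal A_{\bar r}=1_r\otimes\mathcal B(\mathcal H_{\bar r})$. Define $\widetilde{\mathcal A}_r=\Pi_{GI}\mathcal A_r\Pi_{GI}$ and $\widetilde{\mathcal A}_{\bar r}=\Pi_{GI}\mathcal A_{\bar r}\Pi_{GI}$. Let $V_r$ be the set of vertices $v$ with $v$ and all its incident edges in $r$; define $V_{\bar r}$ likewise; let $V_c=V\setminus(V_r\cup V_{\bar r})=\{v_1,\dots,v_n\}$. Put $\hat{\mathcal H}_r=\prod_{v\in V_r}\Pi_v\,\mathcal H_r$ and $\hat{\mathcal H}_{\bar r}=\prod_{v\in V_{\bar r}}\Pi_v\,\mathcal H_{\bar r}$. For $v_i\in V_c$ write $A_{v_i}(g)=A_{v_i,r}(g)A_{v_i,\bar r}(g)$, splitting the tensor factors acting on $r$ and $\bar r$. For $g\in G^n$ set $A_r(g)=\prod_iA_{v_i,r}(g_i)$ and $A_{\bar r}(g)=\prod_i A_{v_i,\bar r}(g_i)$, representations of $G^n$ on $\hat{\mathcal H}_r$ and $\hat{\mathcal H}_{\bar r}$. Irreducible representations of $G^n$ are $\alpha=\alpha_1\boxtimes\cdots\boxtimes\alpha_n$, with $d_\alpha=\prod d_{\alpha_i}$.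 Orthonormal bases: $\{|\alpha ik\rangle_r\}$ of $\hat{\mathcal H}_r$, with $1\le i\le n_\alpha$ (possibly $0$) and $1\le k\le d_\alpha$, such that $A_r(g)|\alpha ik\rangle_r=\sum_{k'}D^\alpha_{k'k}(g)|\alpha ik'\rangle_r$; and $\{|\bar\beta j\ell\rangle_{\bar r}\}$ of $\hat{\mathcal H}_{\bar r}$, with $1\le j\le\bar n_{\bar\beta}$, such that $A_{\bar r}(g)|\bar\beta j\ell\rangle_{\bar r}=\sum_{\ell'}D^{\bar\beta}_{\ell'\ell}(g)|\bar\beta j\ell'\rangle_{\bar r}$. It is known (Lemma 1 of the setting) that every element of $\widetilde{\mathcal H}$ has the form $\sum_{\alpha ijk}\widetilde\psi_{\alpha ij}|\alpha ik\rangle_r|\bar\alpha jk\rangle_{\bar r}$ with $i\le n_\alpha$, $j\le\bar n_{\bar\alpha}$, $k\le d_\alpha$. Also, $\widetilde{\mathcal A}_r$ consists exactly of the operators $\sum_{\alpha ii'jk\ell}\widetilde{\mathcal O}_{\alpha ij}|\alpha ik\rangle_r\langle\alpha j\ell|\otimes|\bar\alpha i'k\rangle_{\bar r}\langle\bar\alpha i'\ell|$, and these annihilate $\widetilde{\mathcal H}^\perp$. *)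

From HB Require Import structures.
From mathcomp Require Import all_boot all_order all_algebra.
Set Implicit Arguments. Unset Strict Implicit. Unset Printing Implicit Defensive.
Import Order.TTheory GRing.Theory Num.Theory.
Local Open Scope ring_scope.

Section Defs.
Variable C : numClosedFieldType.

Definition vdot m (u v : 'cV[C]_m) : C := \sum_i (u i 0)^* * v i 0.
(* H_r (x) H_rb is modelled as 'M_(m,p), with u (x) v := u *m v^T *)
Definition mdot m p (X Y : 'M[C]_(m, p)) : C := \sum_i \sum_j (X i j)^* * Y i j.
Definition adj m p (A : 'M[C]_(m, p)) : 'M[C]_(p, m) := (map_mx Num.conj A)^T.
Definition ketbra m (u v : 'cV[C]_m) : 'M[C]_m := u *m adj v.
Definition tens m p (u : 'cV[C]_m) (v : 'cV[C]_p) : 'M[C]_(m, p) := u *m v^T.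
(* the operator A (x) B acting on 'M_(m,p) = H_r (x) H_rb *)
Definition tensop m p (A : 'M[C]_m) (B : 'M[C]_p) (X : 'M[C]_(m, p)) : 'M[C]_(m, p) :=
  A *m X *m B^T.

Definition orthonormal_basis (J : finType) m (e : J -> 'cV[C]_m) : Prop :=
  (forall x y, vdot (e x) (e y) = (x == y)%:R) /\
  (forall v, exists c : J -> C, v = \sum_x c x *: e x).

(* labels of the irreducible representations alpha of G^n that occur;
   d a = d_alpha, n a = n_alpha, nb a = nbar_{alphabar} *)
Variables (I : finType) (d n nb : I -> nat).

(* index sets of the orthonormal bases |alpha i k>_r, |alphabar j k>_rb and of the
   orthonormal basis |alpha i>_r |alphabar j>_rb of (+)_alpha H^alpha_r (x) H^alphabar_rb *)
Definition rIdx := {a : I & ('I_(n a) * 'I_(d a))%type}.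
Definition rbIdx := {a : I & ('I_(nb a) * 'I_(d a))%type}.
Definition tIdx := {a : I & ('I_(n a) * 'I_(nb a))%type}.
Definition ridx a (i : 'I_(n a)) (k : 'I_(d a)) : rIdx := existT _ a (i, k).
Definition rbidx a (j : 'I_(nb a)) (k : 'I_(d a)) : rbIdx := existT _ a (j, k).
Definition tidx a (i : 'I_(n a)) (j : 'I_(nb a)) : tIdx := existT _ a (i, j).

(* the target space (+)_alpha H^alpha_r (x) H^alphabar_rb, in the basis |alpha i>|alphabar j> *)
Definition tdot (s t : {ffun tIdx -> C}) : C := \sum_x (s x)^* * t x.

Variables (Nr Nrb : nat) (er : rIdx -> 'cV[C]_Nr) (erb : rbIdx -> 'cV[C]_Nrb).

Definition gstate (psi : forall a, 'M[C]_(n a, nb a)) : 'M[C]_(Nr, Nrb) :=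
  \sum_a \sum_(i : 'I_(n a)) \sum_(j : 'I_(nb a)) \sum_(k : 'I_(d a))
     psi a i j *: tens (er (ridx i k)) (erb (rbidx j k)).

(* Htilde, via the known characterization (Lemma 1) *)
Definition Htilde (X : 'M[C]_(Nr, Nrb)) : Prop := exists psi, X = gstate psi.

Definition Wimage (psi : forall a, 'M[C]_(n a, nb a)) : {ffun tIdx -> C} :=
  [ffun x => sqrtC (d (tag x))%:R * psi (tag x) (tagged x).1 (tagged x).2].

Definition is_W (W : 'M[C]_(Nr, Nrb) -> {ffun tIdx -> C}) : Prop :=
  forall psi, W (gstate psi) = Wimage psi.

Definition AtR (Oc : forall a, 'M[C]_(n a)) (X : 'M[C]_(Nr, Nrb)) : 'M[C]_(Nr, Nrb) :=
  \sum_a \sum_(i : 'I_(n a)) \sum_(i' : 'I_(nb a)) \sum_(j : 'I_(n a))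
    \sum_(k : 'I_(d a)) \sum_(l : 'I_(d a))
     Oc a i j *: tensop (ketbra (er (ridx i k)) (er (ridx j l)))
                        (ketbra (erb (rbidx i' k)) (erb (rbidx i' l))) X.

Definition AtRb (Oc : forall a, 'M[C]_(nb a)) (X : 'M[C]_(Nr, Nrb)) : 'M[C]_(Nr, Nrb) :=
  \sum_a \sum_(i : 'I_(n a)) \sum_(j : 'I_(nb a)) \sum_(j' : 'I_(nb a))
    \sum_(k : 'I_(d a)) \sum_(l : 'I_(d a))
     Oc a j j' *: tensop (ketbra (er (ridx i k)) (er (ridx i l)))
                         (ketbra (erb (rbidx j k)) (erb (rbidx j' l))) X.

(* (+)_alpha M_alpha (x) 1^alphabar_rb  and  (+)_alpha 1^alpha_r (x) N_alpha on the target *)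
Definition blockR (M : forall a, 'M[C]_(n a)) (t : {ffun tIdx -> C}) : {ffun tIdx -> C} :=
  [ffun x => \sum_(i' : 'I_(n (tag x)))
      M (tag x) (tagged x).1 i' * t (tidx i' (tagged x).2)].
Definition blockRb (N : forall a, 'M[C]_(nb a)) (t : {ffun tIdx -> C}) : {ffun tIdx -> C} :=
  [ffun x => \sum_(j' : 'I_(nb (tag x)))
      N (tag x) (tagged x).2 j' * t (tidx (tagged x).1 j')].

(* W O W^dagger = M, with O restricted to Htilde: O preserves Htilde and W o O = M o W there *)
Definition conjugates (W : 'M[C]_(Nr, Nrb) -> {ffun tIdx -> C})
  (O : 'M[C]_(Nr, Nrb) -> 'M[C]_(Nr, Nrb)) (M : {ffun tIdx -> C} -> {ffun tIdx -> C}) : Prop :=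
  forall X, Htilde X -> Htilde (O X) /\ W (O X) = M (W X).

End Defs.

(* A gauge-invariant state is determined by its coefficient matrices psi_a, and
   the elementary tensors |a i k>_r |abar j k>_rb built from the two orthonormal
   bases are orthonormal for the Hilbert-Schmidt product mdot.  Hence psi_a i j is
   recovered as the inner product of the state with ANY single such tensor with
   k = l (Lemma gstate_coef).  Everything else follows from this one formula:
   - W exists: average the d_a recovered copies and rescale (W_coef);
   - W is linear (gstate is linear in psi) and isometric, because each psi_a i j
     occurs d_a times in the state, matching |sqrt(d_a) psi_a i j|^2 (W_isometry);
   - a product of ket-bras acts as (|u><v| (x) |u'><v'|) X = <v (x) v'|X> u (x) u',
     so an element of Atilde_r maps psi_a to d_a Oc_a psi_a (AtR_gstate), and an
     element of Atilde_rb maps psi_a to d_a psi_a Oc_a^T (AtRb_gstate); transported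
     through W these are the block operators (d_a Oc_a) (x) 1 and 1 (x) (d_a Oc_a);
   - every block operator M_a is reached by choosing Oc_a = M_a / d_a. *)
From HB Require Import structures.
From mathcomp Require Import all_boot all_order all_algebra.
From mathcomp Require Import ring.
Set Implicit Arguments. Unset Strict Implicit. Unset Printing Implicit Defensive.
Import Order.TTheory GRing.Theory Num.Theory.
Local Open Scope ring_scope.

Section InnerProductCalculus.
Variable C : numClosedFieldType.
Implicit Types (m p : nat) (c : C).

Lemma mdotDr m p (X Y Z : 'M[C]_(m, p)) : mdot X (Y + Z) = mdot X Y + mdot X Z.
Proof.
rewrite /mdot -big_split; apply: eq_bigr => i _; rewrite -big_split.
by apply: eq_bigr => j _; rewrite mxE mulrDr.
Qed.

Lemma mdot0r m p (X : 'M[C]_(m, p)) : mdot X 0 = 0.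
Proof. by rewrite /mdot big1 // => i _; rewrite big1 // => j _; rewrite mxE mulr0. Qed.

Lemma mdotZr m p (X Y : 'M[C]_(m, p)) c : mdot X (c *: Y) = c * mdot X Y.
Proof.
rewrite /mdot mulr_sumr; apply: eq_bigr => i _; rewrite mulr_sumr.
by apply: eq_bigr => j _; rewrite mxE mulrCA.
Qed.

Lemma mdotDl m p (X Y Z : 'M[C]_(m, p)) : mdot (Y + Z) X = mdot Y X + mdot Z X.
Proof.
rewrite /mdot -big_split; apply: eq_bigr => i _; rewrite -big_split.
by apply: eq_bigr => j _; rewrite mxE rmorphD mulrDl.
Qed.

Lemma mdot0l m p (X : 'M[C]_(m, p)) : mdot 0 X = 0.
Proof. by rewrite /mdot big1 // => i _; rewrite big1 // => j _; rewrite mxE rmorph0 mul0r. Qed.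

Lemma mdotZl m p (X Y : 'M[C]_(m, p)) c : mdot (c *: Y) X = c^* * mdot Y X.
Proof.
rewrite /mdot mulr_sumr; apply: eq_bigr => i _; rewrite mulr_sumr.
by apply: eq_bigr => j _; rewrite mxE rmorphM mulrA.
Qed.

Lemma mdot_sumr m p (X : 'M[C]_(m, p)) (J : finType) (F : J -> 'M[C]_(m, p)) :
  mdot X (\sum_j F j) = \sum_j mdot X (F j).
Proof. exact: (big_morph _ (mdotDr X) (mdot0r X)). Qed.

Lemma mdot_suml m p (X : 'M[C]_(m, p)) (J : finType) (F : J -> 'M[C]_(m, p)) :
  mdot (\sum_j F j) X = \sum_j mdot (F j) X.
Proof. exact: (big_morph (fun Y => mdot Y X) (fun Y Z => mdotDl X Y Z) (mdot0l X)). Qed.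

Lemma mdot_tens m p (u q : 'cV[C]_m) (v w : 'cV[C]_p) :
  mdot (tens u v) (tens q w) = vdot u q * vdot v w.
Proof.
rewrite /mdot /vdot mulr_suml; apply: eq_bigr => i _; rewrite mulr_sumr.
apply: eq_bigr => j _; rewrite !mxE !big_ord1 !mxE rmorphM; ring.
Qed.

Lemma tensop_ketbra m p (u v : 'cV[C]_m) (u' v' : 'cV[C]_p) X :
  tensop (ketbra u v) (ketbra u' v') X = mdot (tens v v') X *: tens u u'.
Proof.
apply/matrixP => i j; rewrite /tensop /ketbra /tens /mdot !mxE big_ord1 !mxE.
under eq_bigr do rewrite !mxE big_ord1 mulr_suml.
under [in RHS]eq_bigr do under eq_bigr do rewrite !mxE big_ord1 !mxE.
rewrite [RHS]mulr_suml exchange_big /=.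
apply: eq_bigr => a _; rewrite mulr_suml; apply: eq_bigr => b _.
rewrite !mxE !big_ord1 !mxE rmorphM; ring.
Qed.

Lemma sum_delta (J : finType) (y : J) (F : J -> C) : \sum_x (y == x)%:R * F x = F y.
Proof.
rewrite (bigD1 y) //= eqxx mul1r big1 ?addr0 // => x nx.
by rewrite eq_sym (negPf nx) mul0r.
Qed.

Lemma delta_pair (b1 b2 b3 : bool) (x : C) :
  x * ((b1 && b3)%:R * (b2 && b3)%:R) = b1%:R * (b2%:R * (b3%:R * x)).
Proof. by case: b1; case: b2; case: b3; rewrite /= ?(mul0r, mulr0, mul1r, mulr1). Qed.

End InnerProductCalculus.

Lemma sum_tIdx (C : numClosedFieldType) (I : finType) (n nb : I -> nat)
    (F : tIdx n nb -> C) :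
  \sum_t F t = \sum_a \sum_(i : 'I_(n a)) \sum_(j : 'I_(nb a)) F (tidx i j).
Proof.
transitivity (\sum_a \sum_(p : ('I_(n a) * 'I_(nb a))%type) F (existT _ a p)).
  rewrite (@sig_big_dep _ _ _ I (fun a => ('I_(n a) * 'I_(nb a))%type) xpredT
             (fun _ => xpredT) (fun a p => F (existT _ a p))) /=.
  by apply: eq_bigr => -[a p].
by apply: eq_bigr => a _; rewrite pair_big; apply: eq_bigr => -[i j].
Qed.

Section GaugeInvariantStates.
Variable C : numClosedFieldType.
Variables (I : finType) (d n nb : I -> nat) (Nr Nrb : nat)
  (er : rIdx d n -> 'cV[C]_Nr) (erb : rbIdx d nb -> 'cV[C]_Nrb).
Hypothesis er_orthonormal : forall x y, vdot (er x) (er y) = (x == y)%:R.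
Hypothesis erb_orthonormal : forall x y, vdot (erb x) (erb y) = (x == y)%:R.

Local Notation state := (gstate er erb).

Let etens a (i : 'I_(n a)) (j : 'I_(nb a)) (k : 'I_(d a)) : 'M[C]_(Nr, Nrb) :=
  tens (er (ridx i k)) (erb (rbidx j k)).

Lemma ridx_eq a (i i' : 'I_(n a)) (k k' : 'I_(d a)) :
  (ridx i k == ridx i' k') = (i == i') && (k == k').
Proof. exact: (@eq_Tagged _ (fun a => ('I_(n a) * 'I_(d a))%type) (ridx i k) (i', k')). Qed.

Lemma rbidx_eq a (j j' : 'I_(nb a)) (k k' : 'I_(d a)) :
  (rbidx j k == rbidx j' k') = (j == j') && (k == k').
Proof. exact: (@eq_Tagged _ (fun a => ('I_(nb a) * 'I_(d a))%type) (rbidx j k) (j', k')). Qed.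

Lemma etens_orth a b (i : 'I_(n a)) (j : 'I_(nb a)) (l : 'I_(d a))
    (i' : 'I_(n b)) (j' : 'I_(nb b)) (k : 'I_(d b)) :
  a != b -> mdot (etens i j l) (etens i' j' k) = 0.
Proof.
move=> neq_ab; rewrite mdot_tens er_orthonormal.
case: eqP => [/(congr1 tag) /= eq_ab | _]; last by rewrite mul0r.
by rewrite eq_ab eqxx in neq_ab.
Qed.

(* Within a block the elementary tensors are orthonormal, so the coefficient
   matrix of a gauge-invariant state is read off by any single one of them. *)
Lemma gstate_coef psi a (i : 'I_(n a)) (j : 'I_(nb a)) (l : 'I_(d a)) :
  mdot (etens i j l) (state psi) = psi a i j.
Proof.
rewrite /gstate mdot_sumr (bigD1 a) //= [X in _ + X]big1 ?addr0; last first.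
  move=> b neq_ba; rewrite mdot_sumr big1 // => i' _; rewrite mdot_sumr big1 // => j' _.
  rewrite mdot_sumr big1 // => k _.
  by rewrite mdotZr etens_orth ?mulr0 // eq_sym.
rewrite mdot_sumr; under eq_bigr do rewrite mdot_sumr.
under eq_bigr do under eq_bigr do rewrite mdot_sumr.
under eq_bigr do under eq_bigr do under eq_bigr do
  rewrite mdotZr mdot_tens er_orthonormal erb_orthonormal ridx_eq rbidx_eq delta_pair.
under eq_bigr do under eq_bigr do rewrite -!mulr_sumr sum_delta.
by under eq_bigr do rewrite -mulr_sumr sum_delta; rewrite sum_delta.
Qed.

Lemma gstate_lin c psi phi :
  state (fun a => c *: psi a + phi a) = c *: state psi + state phi.
Proof.
rewrite /gstate scaler_sumr -big_split; apply: eq_bigr => a _.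
rewrite scaler_sumr -big_split; apply: eq_bigr => i _.
rewrite scaler_sumr -big_split; apply: eq_bigr => j _.
rewrite scaler_sumr -big_split; apply: eq_bigr => k _.
by rewrite !mxE scalerDl scalerA.
Qed.

Lemma tensop_ketbra_gstate psi a (i i' : 'I_(n a)) (j j' : 'I_(nb a)) (k l : 'I_(d a)) :
  tensop (ketbra (er (ridx i k)) (er (ridx i' l)))
         (ketbra (erb (rbidx j k)) (erb (rbidx j' l))) (state psi)
  = psi a i' j' *: etens i j k.
Proof. by rewrite tensop_ketbra gstate_coef. Qed.

Lemma AtR_gstate Oc psi :
  AtR er erb Oc (state psi) = state (fun a => (d a)%:R *: (Oc a *m psi a)).
Proof.
rewrite /AtR.
under eq_bigr do under eq_bigr do under eq_bigr do under eq_bigr do under eq_bigr do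
  under eq_bigr do rewrite tensop_ketbra_gstate scalerA.
rewrite /gstate; apply: eq_bigr => a _; apply: eq_bigr => i _.
apply: eq_bigr => j _; rewrite exchange_big /=; apply: eq_bigr => k _.
under eq_bigr do rewrite -scaler_suml.
rewrite -scaler_suml !mxE mulr_sumr; congr (_ *: _); apply: eq_bigr => i' _.
by rewrite sumr_const card_ord mulr_natl.
Qed.

Lemma AtRb_gstate Oc psi :
  AtRb er erb Oc (state psi) = state (fun a => (d a)%:R *: (psi a *m (Oc a)^T)).
Proof.
rewrite /AtRb.
under eq_bigr do under eq_bigr do under eq_bigr do under eq_bigr do under eq_bigr do
  under eq_bigr do rewrite tensop_ketbra_gstate scalerA.
rewrite /gstate; apply: eq_bigr => a _; apply: eq_bigr => i _.
apply: eq_bigr => j _; rewrite exchange_big /=; apply: eq_bigr => k _.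
under eq_bigr do rewrite -scaler_suml.
rewrite -scaler_suml !mxE mulr_sumr; congr (_ *: _); apply: eq_bigr => j' _.
by rewrite sumr_const card_ord mulr_natl !mxE mulrC.
Qed.

Hypothesis d_gt0 : forall a, (0 < d a)%N.

(* d_a and sqrt(d_a) are invertible, which is what makes W bijective. *)
Lemma d_neq0 a : ((d a)%:R : C) != 0.
Proof. by rewrite pnatr_eq0 -lt0n d_gt0. Qed.

Lemma sqrt_d_neq0 a : sqrtC ((d a)%:R : C) != 0.
Proof. by rewrite sqrtC_eq0 d_neq0. Qed.

Lemma sqrt_d_sq a : sqrtC ((d a)%:R : C) * sqrtC ((d a)%:R : C) = (d a)%:R.
Proof. by rewrite -expr2 sqrtCK. Qed.

Lemma sqrt_d_conj a : (sqrtC ((d a)%:R : C))^* = sqrtC ((d a)%:R : C).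
Proof. by rewrite geC0_conj // sqrtC_ge0 ler0n. Qed.

(* The map that averages the d_a recovered copies of each coefficient. *)
Definition W_coef (X : 'M[C]_(Nr, Nrb)) : {ffun tIdx n nb -> C} :=
  [ffun t => (sqrtC (d (tag t))%:R)^-1 *
     \sum_(k : 'I_(d (tag t))) mdot (etens (tagged t).1 (tagged t).2 k) X].

Lemma W_coef_is_W : is_W er erb W_coef.
Proof.
move=> psi; apply/ffunP => -[a [i j]]; rewrite !ffunE /=.
under eq_bigr do rewrite gstate_coef.
rewrite sumr_const card_ord -[psi a i j *+ _]mulr_natl -[X in X * psi a i j]sqrt_d_sq.
by rewrite -mulrA mulKf ?sqrt_d_neq0.
Qed.

Lemma Wimage_onto (t : {ffun tIdx n nb -> C}) :
  Wimage d (fun a => \matrix_(i, j) ((sqrtC (d a)%:R)^-1 * t (tidx i j))) = t.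
Proof.
apply/ffunP => -[a [i j]]; rewrite !ffunE mxE /=.
by rewrite mulrA mulfV ?mul1r ?sqrt_d_neq0.
Qed.

(* Isometry: each psi_a i j occurs d_a times in the state, i.e. with weight sqrt(d_a)^2. *)
Lemma W_isometry psi phi :
  tdot (Wimage d psi) (Wimage d phi) = mdot (state psi) (state phi).
Proof.
rewrite {1}/gstate mdot_suml /tdot sum_tIdx; apply: eq_bigr => a _.
rewrite mdot_suml; apply: eq_bigr => i _; rewrite mdot_suml; apply: eq_bigr => j _.
rewrite mdot_suml; under eq_bigr do rewrite mdotZl gstate_coef.
by rewrite sumr_const card_ord !ffunE /= rmorphM /= sqrt_d_conj mulrACA sqrt_d_sq mulr_natl.
Qed.

Variable W : 'M[C]_(Nr, Nrb) -> {ffun tIdx n nb -> C}.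
Hypothesis W_def : is_W er erb W.

Lemma conjugates_AtR (Oc M : forall a, 'M[C]_(n a)) :
  (forall a, M a = (d a)%:R *: Oc a) -> conjugates er erb W (AtR er erb Oc) (blockR M).
Proof.
move=> M_def X [psi ->]; rewrite AtR_gstate; split; first by eexists.
rewrite !W_def; apply/ffunP => -[a [i j]]; rewrite !ffunE /= !mxE M_def !mulr_sumr.
by apply: eq_bigr => k _; rewrite !ffunE !mxE /=; ring.
Qed.

Lemma conjugates_AtRb (Oc N : forall a, 'M[C]_(nb a)) :
  (forall a, N a = (d a)%:R *: Oc a) -> conjugates er erb W (AtRb er erb Oc) (blockRb N).
Proof.
move=> N_def X [psi ->]; rewrite AtRb_gstate; split; first by eexists.
rewrite !W_def; apply/ffunP => -[a [i j]]; rewrite !ffunE /= !mxE N_def !mulr_sumr.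
by apply: eq_bigr => k _; rewrite !ffunE !mxE /=; ring.
Qed.

(* Dividing by d_a inverts the factor d_a, so every block operator is attained. *)
Lemma rescale_d m (M : forall a, 'M[C]_(m a)) a :
  M a = (d a)%:R *: (((d a)%:R)^-1 *: M a).
Proof. by rewrite scalerA mulfV ?scale1r ?d_neq0. Qed.

End GaugeInvariantStates.

Unset Implicit Arguments.
Set Strict Implicit.

Theorem proposition6 (C : numClosedFieldType) (I : finType) (d n nb : I -> nat)
  (Nr Nrb : nat) (er : rIdx d n -> 'cV[C]_Nr) (erb : rbIdx d nb -> 'cV[C]_Nrb) :
  (forall a, 0 < d a)%N ->
  orthonormal_basis er -> orthonormal_basis erb ->
  (* W is well defined *)
  (exists W, is_W er erb W) /\
  forall W : 'M[C]_(Nr, Nrb) -> {ffun tIdx n nb -> C}, is_W er erb W ->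
  [/\ (* W is a unitary isomorphism Htilde -> (+)_alpha H^alpha_r (x) H^alphabar_rb *)
      (forall X Y (c : C), Htilde er erb X -> Htilde er erb Y ->
          forall x, W (c *: X + Y) x = c * W X x + W Y x),
      (forall X Y, Htilde er erb X -> Htilde er erb Y ->
          tdot (W X) (W Y) = mdot X Y),
      (forall t, exists2 X, Htilde er erb X & W X = t) &
   [/\ (* explicit images *)
      (forall Oc : forall a, 'M[C]_(n a),
          conjugates er erb W (AtR er erb Oc) (blockR (fun a => (d a)%:R *: Oc a))),
      (forall Oc : forall a, 'M[C]_(nb a),
          conjugates er erb W (AtRb er erb Oc) (blockRb (fun a => (d a)%:R *: Oc a))),
      (* every block operator is attained: W Atilde_r W^dagger and W Atilde_rb W^dagger
         are exactly (+)_a B(H^a_r) (x) 1 and (+)_a 1 (x) B(H^abar_rb) *)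
      (forall M : forall a, 'M[C]_(n a),
          exists Oc, conjugates er erb W (AtR er erb Oc) (blockR M)) &
      (forall N : forall a, 'M[C]_(nb a),
          exists Oc, conjugates er erb W (AtRb er erb Oc) (blockRb N))]].
Proof.
move=> d_gt0 [er_on _] [erb_on _]; split; first by exists (W_coef er erb); apply: W_coef_is_W.
move=> W W_def; split.
- move=> X Y c [psi ->] [phi ->] x.
  by rewrite -gstate_lin !W_def !ffunE !mxE mulrDr mulrCA.
- by move=> X Y [psi ->] [phi ->]; rewrite !W_def; apply: W_isometry.
- by move=> t; rewrite -(Wimage_onto d_gt0 t) -W_def; do 2 eexists.
split.
- by move=> Oc; apply: conjugates_AtR.
- by move=> Oc; apply: conjugates_AtRb.
- move=> M; exists (fun a => ((d a)%:R)^-1 *: M a).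
  by apply: conjugates_AtR => //; apply: rescale_d.
- move=> N; exists (fun a => ((d a)%:R)^-1 *: N a).
  by apply: conjugates_AtRb => //; apply: rescale_d.
Qed.
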